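(* For every $d\ge1$ there exist constants $c_d>0$ and $\epsilon_d>0$, depending only on $d$, such that: if $S=\{x_0,\dots,x_d\}\subset\mathbb{R}^d$ satisfies $\mathrm{diam}(S)\le 1$ and $\mathtt{rad}(S)\ge(1-\epsilon)\sqrt{\frac{d}{2(d+1)}}$ for some $0<\epsilon\le\epsilon_d$, then there exists the vertex set $\Delta$ of a regular simplex of diameter (edge length) $1$ with $\mathrm{dist}_H(S,\Delta)\le c_d\,\epsilon$.
   Context: For a bounded set $A\subset\mathbb{R}^d$, $\mathtt{rad}(A)=\inf_{c\in\mathbb{R}^d}\sup_{y\in A}\|c-y\|_2$ is its Chebyshev radius and $\mathrm{diam}(A)=\sup_{x,y\in A}\|x-y\|_2$. A regular simplex of edge length $1$ is a set of $d+1$ points at pairwise distance exactly $1$. For nonempty compact $A,B\subset\mathbb{R}^d$, $\mathrm{dist}_H(A,B)=\max\{\sup_{a\in A}\inf_{b\in B}\|a-b\|_2,\ \sup_{b\in B}\inf_{a\in A}\|a-b\|_2\}$. *)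

From HB Require Import structures.
From mathcomp Require Import all_boot all_order all_algebra.
From mathcomp Require Import boolp classical_sets reals Rstruct.
Set Implicit Arguments. Unset Strict Implicit. Unset Printing Implicit Defensive.
Import Order.TTheory GRing.Theory Num.Theory.
Local Open Scope ring_scope.
Local Open Scope classical_set_scope.

Notation real := Rdefinitions.R.

Definition pt (d : nat) := 'rV[real]_d.

Definition enorm (d : nat) (v : pt d) : real := Num.sqrt (\sum_(i < d) (v 0 i) ^+ 2).

Definition cheb_rad (d : nat) (A : set (pt d)) : real :=
  inf [set sup [set enorm (c - y) | y in A] | c in [set: pt d]].

Definition diam (d : nat) (A : set (pt d)) : real :=
  sup [set enorm (x - y) | x in A & y in A].

Definition hdist (d : nat) (A B : set (pt d)) : real :=
  Num.max (sup [set inf [set enorm (a - b) | b in B] | a in A])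
          (sup [set inf [set enorm (a - b) | a in A] | b in B]).

Definition regular_unit_simplex (d : nat) (y : 'I_d.+1 -> pt d) : Prop :=
  forall i j : 'I_d.+1, i != j -> enorm (y i - y j) = 1.

From HB Require Import structures.
From mathcomp Require Import all_boot all_order all_algebra.
From mathcomp Require Import boolp classical_sets reals Rstruct.
From mathcomp Require Import ring lra.
Import Order.TTheory GRing.Theory Num.Theory.
Local Open Scope ring_scope.
Local Open Scope classical_set_scope.
Set Implicit Arguments. Unset Strict Implicit. Unset Printing Implicit Defensive.

(* Let l be a near-maximiser of the dispersion Phi(l) = sum_ij l_i l_j |x_i - x_j|^2 over
   probability weights.  Moving l slightly towards a vertex k cannot increase Phi much,
   which puts every x_k within sqrt(Phi/2 + O(eps)) of the barycentre sum_i l_i x_i.  The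
   radius hypothesis then forces Phi >= 1 - 1/(d+1) - O(eps); as
   Phi <= 1 - sum_i l_i^2 - l_a l_b (1 - |x_a - x_b|^2), the weights are almost uniform
   and every pairwise distance is at least 1 - O(eps).
   Points whose pairwise distances are all within O(eps) of 1 are then moved onto a
   regular simplex one at a time: given a regular simplex y_0, ..., y_(k-1) and a point p
   at squared distance 1 +- E from each y_j, replace p by the point on the normal through
   the centroid of the y_j, on the side of p, at distance 1 from all of them; this moves
   p by O(E). *)

(** * Inner product *)

Definition dotp d (u v : pt d) : real := \sum_(i < d) u 0 i * v 0 i.
Definition sqnorm d (u : pt d) : real := dotp u u.

Section InnerProduct.
Variable d : nat.
Implicit Types (u v w : pt d) (a : real).

Lemma dotpC u v : dotp u v = dotp v u.
Proof. by apply: eq_bigr => i _; rewrite mulrC. Qed.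

Lemma dotpDl u v w : dotp (u + v) w = dotp u w + dotp v w.
Proof. by rewrite /dotp -big_split; apply: eq_bigr => i _; rewrite !mxE mulrDl. Qed.

Lemma dotpZl a u w : dotp (a *: u) w = a * dotp u w.
Proof. by rewrite /dotp mulr_sumr; apply: eq_bigr => i _; rewrite !mxE mulrA. Qed.

Lemma dotpNl u w : dotp (- u) w = - dotp u w.
Proof. by rewrite -scaleN1r dotpZl mulN1r. Qed.

Lemma dotpBl u v w : dotp (u - v) w = dotp u w - dotp v w.
Proof. by rewrite dotpDl dotpNl. Qed.

Lemma dotp0l w : dotp 0 w = 0.
Proof. by rewrite -(scale0r 0) dotpZl mul0r. Qed.

Lemma dotpDr u v w : dotp w (u + v) = dotp w u + dotp w v.
Proof. by rewrite dotpC dotpDl !(dotpC w). Qed.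

Lemma dotpZr a u w : dotp w (a *: u) = a * dotp w u.
Proof. by rewrite dotpC dotpZl dotpC. Qed.

Lemma dotpBr u v w : dotp w (u - v) = dotp w u - dotp w v.
Proof. by rewrite dotpC dotpBl !(dotpC w). Qed.

Lemma dotp0r w : dotp w 0 = 0.
Proof. by rewrite dotpC dotp0l. Qed.

Lemma dotp_suml (I : finType) (P : pred I) (F : I -> pt d) w :
  dotp (\sum_(i | P i) F i) w = \sum_(i | P i) dotp (F i) w.
Proof. by elim/big_rec2: _ => [|i y1 y2 _ <-]; rewrite ?dotp0l ?dotpDl. Qed.

Lemma dotp_sumr (I : finType) (P : pred I) (F : I -> pt d) w :
  dotp w (\sum_(i | P i) F i) = \sum_(i | P i) dotp w (F i).
Proof. by rewrite dotpC dotp_suml; apply: eq_bigr => i _; rewrite dotpC. Qed.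

Lemma sqnorm0 : sqnorm (0 : pt d) = 0.
Proof. exact: dotp0l. Qed.

Lemma sqnorm_ge0 u : 0 <= sqnorm u.
Proof. by apply: sumr_ge0 => i _; rewrite -expr2 sqr_ge0. Qed.

Lemma enormE u : enorm u = Num.sqrt (sqnorm u).
Proof. by congr Num.sqrt; apply: eq_bigr => i _; rewrite expr2. Qed.

Lemma enorm_ge0 u : 0 <= enorm u.
Proof. by rewrite enormE sqrtr_ge0. Qed.

Lemma sqr_enorm u : enorm u ^+ 2 = sqnorm u.
Proof. by rewrite enormE sqr_sqrtr // sqnorm_ge0. Qed.

Lemma sqnormD u v : sqnorm (u + v) = sqnorm u + 2 * dotp u v + sqnorm v.
Proof. rewrite /sqnorm dotpDl !dotpDr (dotpC v u); ring. Qed.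

Lemma sqnormB u v : sqnorm (u - v) = sqnorm u - 2 * dotp u v + sqnorm v.
Proof. rewrite /sqnorm dotpBl !dotpBr (dotpC v u); ring. Qed.

Lemma sqnormBC u v : sqnorm (u - v) = sqnorm (v - u).
Proof. by rewrite -opprB /sqnorm dotpNl dotpC dotpNl opprK. Qed.

Lemma sqnormZ a u : sqnorm (a *: u) = a ^+ 2 * sqnorm u.
Proof. rewrite /sqnorm dotpZl dotpZr; ring. Qed.

Lemma normr_dotp_le u v a : 0 < a ->
  `|2 * dotp u v| <= a * sqnorm u + sqnorm v / a.
Proof.
move=> a_gt0.
have h1 := sqnorm_ge0 (a *: u + v); have h2 := sqnorm_ge0 (a *: u - v).
rewrite sqnormD sqnormZ dotpZl in h1; rewrite sqnormB sqnormZ dotpZl in h2.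
have hv : sqnorm v = a * (sqnorm v / a) by field; rewrite gt_eqF.
move: (sqnorm v / a) hv h1 h2 => t -> h1 h2.
rewrite ler_norml; apply/andP; split; nra.
Qed.

End InnerProduct.

(** * Barycentres and dispersion *)

Definition bary d n (x : 'I_n -> pt d) (l : 'I_n -> real) : pt d :=
  \sum_i l i *: x i.

(* Twice the l-weighted variance of x, see [sqdist_bary]. *)
Definition dispersion d n (x : 'I_n -> pt d) (l : 'I_n -> real) : real :=
  \sum_i l i * \sum_j l j * sqnorm (x i - x j).

Section Barycentre.
Variables (d n : nat) (x : 'I_n -> pt d) (l : 'I_n -> real).
Hypothesis l_sum1 : \sum_i l i = 1.

Lemma sum_sqdist_bary z :
  \sum_j l j * sqnorm (z - x j) =
  sqnorm (z - bary x l) + \sum_j l j * sqnorm (bary x l - x j).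
Proof.
set c := bary x l.
have centred : \sum_j l j *: (c - x j) = 0.
  under eq_bigr => j _ do rewrite scalerBr.
  by rewrite sumrB -scaler_suml l_sum1 scale1r subrr.
transitivity (\sum_j l j * sqnorm (z - c) + 2 * dotp (z - c) (\sum_j l j *: (c - x j)) +
              \sum_j l j * sqnorm (c - x j)).
  rewrite dotp_sumr mulr_sumr -!big_split /=; apply: eq_bigr => j _.
  have -> : z - x j = (z - c) + (c - x j) by rewrite addrA subrK.
  by rewrite (sqnormD (z - c)) dotpZr; ring.
by rewrite centred dotp0r mulr0 addr0 -mulr_suml l_sum1 mul1r.
Qed.

Lemma sqdist_bary k :
  sqnorm (x k - bary x l) = \sum_j l j * sqnorm (x k - x j) - dispersion x l / 2.
Proof.
set c := bary x l; set psi := \sum_j l j * sqnorm (c - x j).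
have -> : dispersion x l = 2 * psi.
  rewrite /dispersion (eq_bigr (fun i => l i * sqnorm (c - x i) + l i * psi)).
    by rewrite big_split /= -mulr_suml l_sum1 -/psi; ring.
  by move=> i _; rewrite sum_sqdist_bary sqnormBC mulrDr.
by rewrite sum_sqdist_bary -/c -/psi; field.
Qed.

End Barycentre.

Lemma natr_neq0 k : (0 < k)%N -> k%:R != 0 :> real.
Proof. by rewrite pnatr_eq0 -lt0n. Qed.

Definition unif n : 'I_n -> real := fun _ => n%:R^-1.
Arguments unif : clear implicits.

Lemma sum_unif n : (0 < n)%N -> \sum_(i < n) unif n i = 1.
Proof. by move=> n_gt0; rewrite /unif sumr_const card_ord -[_ *+ n]mulr_natl mulfV ?natr_neq0. Qed.

Definition prob_weights n (l : 'I_n -> real) : Prop :=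
  (forall i, 0 <= l i) /\ \sum_i l i = 1.

Definition mix_vertex n (l : 'I_n -> real) (s : real) (k : 'I_n) : 'I_n -> real :=
  fun i => (1 - s) * l i + s * (i == k)%:R.

Section Dispersion.
Variables (d n : nat) (x : 'I_n -> pt d).
Hypothesis x_diam : forall i j, sqnorm (x i - x j) <= 1.
Implicit Types (l : 'I_n -> real) (s : real) (a b k : 'I_n).

Lemma sum_mix_vertex l s k (F : 'I_n -> real) :
  \sum_i mix_vertex l s k i * F i = (1 - s) * \sum_i l i * F i + s * F k.
Proof.
rewrite /mix_vertex; under eq_bigr => i _ do rewrite mulrDl.
rewrite big_split /= mulr_sumr; congr (_ + _).
  by apply: eq_bigr => i _; rewrite mulrA.
rewrite (bigD1 k) //= eqxx big1 ?addr0 ?mulr1 // => i /negbTE ->.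
by rewrite mulr0 mul0r.
Qed.

Lemma prob_weights_mix_vertex l s k : prob_weights l -> 0 <= s <= 1 ->
  prob_weights (mix_vertex l s k).
Proof.
move=> [l_ge0 l_sum1] /andP[s_ge0 s_le1]; split=> [i|].
  by rewrite addr_ge0 ?mulr_ge0 ?subr_ge0 ?ler0n.
have := sum_mix_vertex l s k (fun=> 1); under eq_bigr => i _ do rewrite mulr1.
by move=> ->; under eq_bigr => i _ do rewrite mulr1; rewrite l_sum1; ring.
Qed.

Lemma dispersion_mix_vertex l s k :
  dispersion x (mix_vertex l s k) =
  (1 - s) ^+ 2 * dispersion x l + 2 * s * (1 - s) * \sum_j l j * sqnorm (x k - x j).
Proof.
rewrite /dispersion; under eq_bigr => i _ do rewrite sum_mix_vertex.
rewrite sum_mix_vertex subrr sqnorm0 mulr0 addr0.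
transitivity ((1 - s) * ((1 - s) * \sum_i l i * \sum_j l j * sqnorm (x i - x j) +
                         s * \sum_j l j * sqnorm (x k - x j)) +
              s * ((1 - s) * \sum_j l j * sqnorm (x k - x j))); last by ring.
congr (_ * _ + _); rewrite !mulr_sumr -big_split /=; apply: eq_bigr => i _.
by rewrite sqnormBC; ring.
Qed.

Lemma dispersion_ge0 l : (forall i, 0 <= l i) -> 0 <= dispersion x l.
Proof.
move=> l_ge0; apply: sumr_ge0 => i _; rewrite mulr_ge0 //.
by apply: sumr_ge0 => j _; rewrite mulr_ge0 ?sqnorm_ge0.
Qed.

Lemma sum_weighted_sqdist_le1 l i : prob_weights l -> \sum_j l j * sqnorm (x i - x j) <= 1.
Proof.
move=> [l_ge0 l_sum1]; rewrite -l_sum1; apply: ler_sum => j _.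
by rewrite ler_piMr.
Qed.

Lemma dispersion_le1 l : prob_weights l -> dispersion x l <= 1.
Proof.
move=> l_prob; have [l_ge0 l_sum1] := l_prob.
rewrite -[X in _ <= X]l_sum1; apply: ler_sum => i _.
by rewrite ler_piMr // sum_weighted_sqdist_le1.
Qed.

Lemma dispersion_le_pair l a b : prob_weights l -> a != b ->
  dispersion x l <= 1 - \sum_i l i ^+ 2 - l a * l b * (1 - sqnorm (x a - x b)).
Proof.
move=> [l_ge0 l_sum1] ab.
(* All terms of T i are nonnegative; keep only the term (a, b). *)
pose T i := \sum_j l j * (1 - (i == j)%:R - sqnorm (x i - x j)).
have T_term_ge0 i j : 0 <= l j * (1 - (i == j)%:R - sqnorm (x i - x j)).
  rewrite mulr_ge0 //; have [->|_] := eqVneq i j; last by rewrite subr0 subr_ge0.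
  by rewrite (subrr (x j)) sqnorm0 subr0 subrr.
have Ta : l b * (1 - sqnorm (x a - x b)) <= T a.
  by rewrite /T (bigD1 b) //= (negbTE ab) subr0 lerDl sumr_ge0.
have T_eq i : T i = 1 - l i - \sum_j l j * sqnorm (x i - x j).
  rewrite /T (eq_bigr (fun j => l j - l j * (i == j)%:R - l j * sqnorm (x i - x j)));
    last by move=> j _; ring.
  rewrite !sumrB l_sum1 (bigD1 i) //= eqxx mulr1 big1 ?addr0 // => j ji.
  by rewrite eq_sym (negbTE ji) mulr0.
have sum_T : \sum_i l i * T i = 1 - \sum_i l i ^+ 2 - dispersion x l.
  rewrite /dispersion (eq_bigr (fun i => l i - l i ^+ 2 - l i * \sum_j l j * sqnorm (x i - x j)));
    last by move=> i _; rewrite T_eq; ring.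
  by rewrite !sumrB l_sum1.
have : l a * T a <= \sum_i l i * T i.
  by rewrite (bigD1 a) //= lerDl sumr_ge0 // => i _; rewrite mulr_ge0 ?sumr_ge0.
rewrite sum_T; have := ler_wpM2l (l_ge0 a) Ta; lra.
Qed.

Lemma exists_near_max_dispersion e : (0 < n)%N -> 0 < e ->
  exists2 l, prob_weights l &
    forall m, prob_weights m -> dispersion x m <= dispersion x l + e.
Proof.
move=> n_gt0 e_gt0; pose S := [set dispersion x l | l in @prob_weights n].
have S_sup : has_sup S.
  split; first by exists (dispersion x (unif n)), (unif n) => //; split=> [i|];
    rewrite ?sum_unif // invr_ge0 ler0n.
  by exists 1 => _ [l l_prob <-]; exact: dispersion_le1.
have [_ [l l_prob <-] l_near] := sup_adherent e_gt0 S_sup.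
exists l => // m m_prob; have := sup_upper_bound S_sup (ex_intro2 _ _ m m_prob erefl).
lra.
Qed.

(* Moving l towards the vertex k by e changes the dispersion Phi by 2 e (A - Phi) + O(e^2),
   where A = sum_j l_j |x_k - x_j|^2 and A - Phi / 2 = |x_k - bary x l|^2. *)
Lemma sqdist_bary_near_max l e : prob_weights l -> 0 < e -> e <= 1 ->
  (forall m, prob_weights m -> dispersion x m <= dispersion x l + e ^+ 2) ->
  forall k, sqnorm (x k - bary x l) <= dispersion x l / 2 + 2 * e.
Proof.
move=> l_prob e_gt0 e_le1 l_max k; have [l_ge0 l_sum1] := l_prob.
have e_unit : 0 <= e <= 1 by rewrite e_le1 ltW.
have := l_max _ (prob_weights_mix_vertex k l_prob e_unit).
rewrite dispersion_mix_vertex sqdist_bary //.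
have := sum_weighted_sqdist_le1 k l_prob; have := dispersion_ge0 l_ge0.
move: (dispersion x l) (\sum_j l j * sqnorm (x k - x j)) => P A P_ge0 A_le1 mix_le.
have : e * (2 * (1 - e) * (A - P / 2) - P - e) <= 0 by lra.
rewrite pmulr_rle0 // subr_le0 => first_order.
have : e * (A - P / 2) <= e by rewrite ler_piMr ?(ltW e_gt0) //; lra.
lra.
Qed.

End Dispersion.

Lemma sqr_sub_inv_le n (l : 'I_n -> real) a : \sum_i l i = 1 ->
  (l a - n%:R^-1) ^+ 2 <= \sum_i l i ^+ 2 - n%:R^-1.
Proof.
move=> l_sum1; have n_gt0 : (0 < n)%N by case: n a {l l_sum1} => [[]|].
have n_neq0 := natr_neq0 n_gt0.
have -> : \sum_i l i ^+ 2 - n%:R^-1 = \sum_i (l i - n%:R^-1) ^+ 2.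
  rewrite [RHS](eq_bigr (fun i => l i ^+ 2 - 2 * n%:R^-1 * l i + n%:R^-1 ^+ 2));
    last by move=> i _; ring.
  rewrite big_split sumrB /= -mulr_sumr l_sum1 sumr_const card_ord -[_ *+ n]mulr_natl.
  by field.
by rewrite (bigD1 a) //= lerDl sumr_ge0 // => i _; rewrite sqr_ge0.
Qed.

Lemma half_le_of_sqr_sub_le (a c : real) : 0 < c -> (a - c) ^+ 2 <= c ^+ 2 / 4 -> c / 2 <= a.
Proof. by move=> c_gt0 h; nra. Qed.

(** * Stability of Jung's inequality *)

Definition jung_const n : real := 24 * (n.+1)%:R ^+ 2.

Lemma jung_const_ge1 n : 1 <= jung_const n.
Proof.
have : 1 <= (n.+1)%:R :> real by rewrite ler1n.
by rewrite /jung_const; move: (n.+1)%:R => N N_ge1; nra.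
Qed.

Section JungStability.
Variables (d n : nat) (x : 'I_n.+1 -> pt d) (e : real).
Hypotheses (e_gt0 : 0 < e) (x_diam : forall i j, sqnorm (x i - x j) <= 1)
  (x_rad : forall c M, (forall i, sqnorm (c - x i) <= M) ->
             (1 - e) ^+ 2 * (n%:R / (2 * (n.+1)%:R)) <= M).

(* The radius hypothesis at the barycentre of a near-maximiser gives
   (1 - e)^2 (1 - 1/(n+1)) <= Phi + 4 e, against the upper bound [dispersion_le_pair]. *)
Lemma exists_weights_pair_defect_le a b : e <= 1 -> a != b ->
  exists2 l, prob_weights l &
    l a * l b * (1 - sqnorm (x a - x b)) + (\sum_i l i ^+ 2 - (n.+1)%:R^-1) <= 6 * e.
Proof.
move=> e_le1 ab.
have [l l_prob l_max] := exists_near_max_dispersion x_diam (ltn0Sn n) (exprn_gt0 2 e_gt0).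
exists l => //.
have bary_ball i : sqnorm (bary x l - x i) <= dispersion x l / 2 + 2 * e.
  by rewrite sqnormBC; exact: sqdist_bary_near_max.
have := x_rad bary_ball; have := dispersion_le_pair x_diam l_prob ab.
have -> : n%:R / (2 * (n.+1)%:R) = (1 - (n.+1)%:R^-1) / 2 :> real.
  by rewrite -natr1; field; rewrite addrC natr1 pnatr_eq0.
have : 0 <= (n.+1)%:R^-1 * (2 * e - e ^+ 2) :> real.
  by rewrite mulr_ge0 ?invr_ge0 ?ler0n //; have := e_gt0; nra.
have := e_gt0; move: (n.+1)%:R^-1 => c; nra.
Qed.

Lemma jung_stability a b : jung_const n * e <= 1 -> a != b ->
  1 - jung_const n * e <= sqnorm (x a - x b).
Proof.
rewrite /jung_const => e_small ab.
have N_ge1 : 1 <= (n.+1)%:R :> real by rewrite ler1n.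
have cN : (n.+1)%:R^-1 * (n.+1)%:R = 1 :> real by rewrite mulVf // gt_eqF //; lra.
have c_gt0 : 0 < (n.+1)%:R^-1 :> real by rewrite invr_gt0; lra.
have [|l [l_ge0 l_sum1] defect] := exists_weights_pair_defect_le (a := a) _ ab.
  by have := e_gt0; nra.
have dev_a := sqr_sub_inv_le a l_sum1; have dev_b := sqr_sub_inv_le b l_sum1.
have t_ge0 : 0 <= 1 - sqnorm (x a - x b) by rewrite subr_ge0.
move: (l_ge0 a) (l_ge0 b) e_small defect dev_a dev_b t_ge0 cN N_ge1 c_gt0.
move: ((n.+1)%:R) ((n.+1)%:R^-1) (l a) (l b) (\sum_i l i ^+ 2) (sqnorm (x a - x b)).
move=> N c la lb Q D la_ge0 lb_ge0 e_small defect dev_a dev_b t_ge0 cN N_ge1 c_gt0.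
(* The defect bound forces la, lb >= c/2, whence (1 - D) c^2/4 <= 6 e. *)
have lab_t : la * lb * (1 - D) <= 6 * e by have := sqr_ge0 (la - c); lra.
have dev_small : 6 * e <= c ^+ 2 / 4.
  have -> : 6 * e = c ^+ 2 * (6 * e * N ^+ 2) by rewrite mulrCA -mulrA -exprMn cN expr1n mulr1.
  have := sqr_ge0 c; nra.
have Q_near : Q - c <= c ^+ 2 / 4.
  by have := mulr_ge0 (mulr_ge0 la_ge0 lb_ge0) t_ge0; lra.
have la_ge := half_le_of_sqr_sub_le c_gt0 (le_trans dev_a Q_near).
have lb_ge := half_le_of_sqr_sub_le c_gt0 (le_trans dev_b Q_near).
have lab_ge : c ^+ 2 / 4 <= la * lb.
  have c2_ge0 : 0 <= c / 2 by rewrite divr_ge0 ?ltW.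
  by have := ler_pM c2_ge0 c2_ge0 la_ge lb_ge; rewrite -expr2 expr_div_n; lra.
have : (1 - D) * (c ^+ 2 / 4) * (4 * N ^+ 2) <= 6 * e * (4 * N ^+ 2).
  by rewrite ler_wpM2r ?mulr_ge0 ?sqr_ge0 //; have := ler_wpM2l t_ge0 lab_ge; lra.
have -> : (1 - D) * (c ^+ 2 / 4) * (4 * N ^+ 2) = (1 - D) * (c * N) ^+ 2 by field.
by rewrite cN expr1n mulr1; lra.
Qed.

End JungStability.

(** * Regular simplices and their extension *)

Definition centroid d k (f : nat -> pt d) : pt d := bary (fun i : 'I_k => f i) (unif k).

(* Families are indexed by nat so that they can be extended one point at a time; only
   the indices below k matter. *)
Definition regular_seq d k (f : nat -> pt d) : Prop :=
  forall i j, (i < k)%N -> (j < k)%N -> i != j -> sqnorm (f i - f j) = 1.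

Section RegularSimplex.
Variables (d k : nat) (f : nat -> pt d).
Hypothesis k_gt0 : (0 < k)%N.
Local Notation g := (centroid k f).

Lemma sum_sub_centroid : \sum_(j < k) (f j - g) = 0.
Proof.
rewrite sumrB sumr_const card_ord /centroid /bary -scaler_sumr -scaler_nat scalerA.
by rewrite mulfV ?natr_neq0 // scale1r subrr.
Qed.

Lemma sum_dotp_sub_centroid a : \sum_(j < k) dotp a (f j - g) = 0.
Proof. by rewrite -dotp_sumr sum_sub_centroid dotp0r. Qed.

Hypothesis f_reg : regular_seq k f.

Lemma sum_unif_sqdist_regular (i : 'I_k) :
  \sum_(j < k) unif k j * sqnorm (f i - f j) = 1 - k%:R^-1.
Proof.
rewrite (bigD1 i) //= subrr sqnorm0 mulr0 add0r.
rewrite (eq_bigr (fun _ => k%:R^-1)) => [|j ji]; last first.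
  by rewrite f_reg ?mulr1 // eq_sym.
rewrite sumr_const cardC1 card_ord -[_ *+ _]mulr_natl -subn1 (natrB _ k_gt0).
by rewrite mulrBl mulfV ?natr_neq0 ?mul1r.
Qed.

Lemma sqnorm_sub_centroid (i : 'I_k) :
  sqnorm (f i - g) = (k%:R - 1) / (2 * k%:R).
Proof.
have unif1 := sum_unif k_gt0.
have disp : dispersion (fun i : 'I_k => f i) (unif k) = 1 - k%:R^-1.
  rewrite /dispersion (eq_bigr (fun _ => k%:R^-1 * (1 - k%:R^-1))) => [|j _].
    by rewrite -mulr_suml unif1 mul1r.
  by rewrite sum_unif_sqdist_regular.
rewrite /centroid sqdist_bary // sum_unif_sqdist_regular disp.
by field; rewrite natr_neq0.
Qed.

Lemma dotp_sub_centroid (i j : 'I_k) :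
  dotp (f i - g) (f j - g) = (i == j)%:R / 2 - (2 * k%:R)^-1.
Proof.
have [<-|ij] := eqVneq i j.
  by rewrite -/(sqnorm _) sqnorm_sub_centroid /=; field; rewrite natr_neq0.
have := f_reg (ltn_ord i) (ltn_ord j) ij.
have -> : f i - f j = (f i - g) - (f j - g) by rewrite opprB addrA subrK.
rewrite sqnormB !sqnorm_sub_centroid => h.
have -> : dotp (f i - g) (f j - g) = (k%:R - 1) / (2 * k%:R) - 1 / 2 by lra.
by rewrite /=; field; rewrite natr_neq0.
Qed.

End RegularSimplex.

(* For a regular family the Gram matrix of the f j - centroid k f is (I - J/k)/2
   ([dotp_sub_centroid]), so this is the orthogonal projection onto their span. *)
Definition proj_span d k (f : nat -> pt d) (a : pt d) : pt d :=
  2 *: \sum_(j < k) dotp a (f j - centroid k f) *: (f j - centroid k f).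

Definition perp_span d k (f : nat -> pt d) (a : pt d) : pt d := a - proj_span k f a.

(* As |f j - centroid k f|^2 = (k-1)/(2k) ([sqnorm_sub_centroid]), the point of the normal
   through the centroid at squared height (k+1)/(2k) is at distance 1 from every f j. *)
Definition apex d k (f : nat -> pt d) (p : pt d) : pt d :=
  centroid k f +
  (Num.sqrt ((k%:R + 1) / (2 * k%:R)) / Num.sqrt (sqnorm (perp_span k f (p - centroid k f))))
    *: perp_span k f (p - centroid k f).

Section Extension.
Variables (d k : nat) (f : nat -> pt d).
Hypotheses (k_gt0 : (0 < k)%N) (f_reg : regular_seq k f).
Local Notation g := (centroid k f).
Local Notation proj := (proj_span k f).
Local Notation perp := (perp_span k f).
Local Notation height2 := ((k%:R + 1) / (2 * k%:R) : real).

Lemma dotp_perp_span (i : 'I_k) a : dotp (f i - g) (perp a) = 0.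
Proof.
rewrite /perp_span /proj_span dotpBr dotpZr dotp_sumr.
under eq_bigr => j _ do rewrite dotpZr dotp_sub_centroid // mulrBr.
rewrite sumrB -mulr_suml sum_dotp_sub_centroid // mul0r subr0.
rewrite (bigD1 i) //= eqxx big1 => [|j ji]; last by rewrite eq_sym (negbTE ji) mul0r mulr0.
by rewrite dotpC /=; field.
Qed.

Lemma dotp_proj_perp a : dotp (proj a) (perp a) = 0.
Proof.
rewrite /proj_span dotpZl dotp_suml big1 ?mulr0 // => j _.
by rewrite dotpZl dotp_perp_span mulr0.
Qed.

Lemma proj_add_perp a : proj a + perp a = a.
Proof. by rewrite /perp_span addrC subrK. Qed.

Lemma sqnorm_proj_span a : sqnorm (proj a) = 2 * \sum_(j < k) dotp a (f j - g) ^+ 2.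
Proof.
have -> : sqnorm (proj a) = dotp (proj a) (proj a + perp a).
  by rewrite dotpDr dotp_proj_perp addr0.
rewrite proj_add_perp {1}/proj_span dotpZl dotp_suml; congr (_ * _).
by apply: eq_bigr => j _; rewrite dotpZl dotpC.
Qed.

Lemma sqnorm_perp_span a : sqnorm (perp a) = sqnorm a - sqnorm (proj a).
Proof.
have := sqnormD (proj a) (perp a).
by rewrite proj_add_perp dotp_proj_perp mulr0 addr0 => ->; ring.
Qed.

Lemma sqnorm_apex_sub p (j : 'I_k) :
  0 < sqnorm (perp (p - g)) -> sqnorm (apex k f p - f j) = 1.
Proof.
move=> w_gt0; set w := perp (p - g).
have -> : apex k f p - f j =
    (Num.sqrt height2 / Num.sqrt (sqnorm w)) *: w - (f j - g).
  by rewrite /apex opprB -addrA addrCA.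
rewrite sqnormB sqnormZ dotpZl dotpC dotp_perp_span mulr0 mulr0 subr0.
rewrite sqnorm_sub_centroid // expr_div_n !sqr_sqrtr ?sqnorm_ge0 //; last first.
  by rewrite divr_ge0 // ?mulr_ge0 // ?addr_ge0 ?ler0n.
by field; rewrite natr_neq0 // gt_eqF.
Qed.

Lemma sqnorm_sub_offset p (j : 'I_k) :
  sqnorm (p - f j) = sqnorm (p - g) - 2 * dotp (p - g) (f j - g) + (k%:R - 1) / (2 * k%:R).
Proof.
have -> : p - f j = (p - g) - (f j - g) by rewrite opprB addrA subrK.
by rewrite sqnormB sqnorm_sub_centroid.
Qed.

Lemma mean_sqdist_offset p :
  k%:R^-1 * \sum_(j < k) (sqnorm (p - f j) - 1) = sqnorm (p - g) - height2.
Proof.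
rewrite (eq_bigr (fun j : 'I_k => sqnorm (p - g) + (k%:R - 1) / (2 * k%:R) - 1
                                  - 2 * dotp (p - g) (f j - g))) => [|j _]; last first.
  by rewrite sqnorm_sub_offset; ring.
rewrite sumrB -mulr_sumr sum_dotp_sub_centroid // mulr0 subr0 sumr_const card_ord.
by rewrite -[_ *+ k]mulr_natl; field; rewrite natr_neq0.
Qed.

Let height2_ge_half : 1 / 2 <= height2.
Proof. by rewrite ler_pdivlMr ?mulr_gt0 ?ltr0n //; lra. Qed.

Section NearApex.
Variables (p : pt d) (E : real).
Hypotheses (p_near : forall j, (j < k)%N -> `|sqnorm (p - f j) - 1| <= E)
           (E_small : E * (8 * k%:R + 4) <= 1).

Lemma sqnorm_offset_near : `|sqnorm (p - g) - height2| <= E.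
Proof.
rewrite -mean_sqdist_offset normrM normfV normr_nat ler_pdivrMl ?ltr0n //.
apply: le_trans (ler_norm_sum _ _ _) _.
have -> : k%:R * E = \sum_(j < k) E by rewrite sumr_const card_ord mulr_natl.
by apply: ler_sum => j _; exact: p_near.
Qed.

Lemma dotp_offset_near (j : 'I_k) : `|dotp (p - g) (f j - g)| <= E.
Proof.
have := sqnorm_offset_near; have := p_near (ltn_ord j).
have hc : (k%:R - 1) / (2 * k%:R) = 1 - height2 :> real by field; rewrite natr_neq0.
rewrite sqnorm_sub_offset hc !ler_norml => /andP[? ?] /andP[? ?].
apply/andP; split; lra.
Qed.

Lemma sqnorm_proj_near : sqnorm (proj (p - g)) <= 2 * k%:R * E ^+ 2.
Proof.
rewrite sqnorm_proj_span -mulrA ler_pM2l //.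
have -> : k%:R * E ^+ 2 = \sum_(j < k) E ^+ 2 by rewrite sumr_const card_ord mulr_natl.
apply: ler_sum => j _.
by have := dotp_offset_near j; rewrite ler_norml => /andP[? ?]; nra.
Qed.

Let E_ge0 : 0 <= E.
Proof. exact: le_trans (normr_ge0 _) (p_near k_gt0). Qed.

Lemma sqnorm_perp_near : `|sqnorm (perp (p - g)) - height2| <= 2 * E.
Proof.
have E2_le : 2 * k%:R * E ^+ 2 <= E.
  have k_ge0 : 0 <= k%:R :> real := ler0n _ _.
  have := mulr_ge0 (mulr_ge0 k_ge0 E_ge0) E_ge0.
  have slack : 0 <= 1 - E * (8 * k%:R + 4) by rewrite subr_ge0.
  have := mulr_ge0 E_ge0 slack; rewrite expr2; nra.
have := sqnorm_offset_near; have := sqnorm_proj_near.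
have := sqnorm_ge0 (proj (p - g)).
rewrite sqnorm_perp_span !ler_norml => ? ? /andP[? ?].
apply/andP; split; lra.
Qed.

Lemma sqnorm_perp_gt0 : 0 < sqnorm (perp (p - g)).
Proof.
have E_le : 12 * E <= 1.
  have : 1 <= k%:R :> real by rewrite ler1n.
  by have := E_ge0; move: E_small; nra.
have := sqnorm_perp_near; have := height2_ge_half.
rewrite ler_norml => ? /andP[? ?]; lra.
Qed.

Lemma apex_near : sqnorm (p - apex k f p) <= (2 * k%:R + 8) * E ^+ 2.
Proof.
set w := perp (p - g); set s := Num.sqrt (sqnorm w); set t := Num.sqrt height2.
have s_gt0 : 0 < s by rewrite sqrtr_gt0 sqnorm_perp_gt0.
have t_ge0 : 0 <= t := sqrtr_ge0 _.
have ss : s ^+ 2 = sqnorm w by rewrite sqr_sqrtr ?sqnorm_ge0.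
have tt : t ^+ 2 = height2 by rewrite sqr_sqrtr //; have := height2_ge_half; lra.
have -> : p - apex k f p = proj (p - g) + (1 - t / s) *: w.
  have -> : p - apex k f p = (p - g) - (t / s) *: w by rewrite /apex opprD addrA.
  by rewrite -{1}(proj_add_perp (p - g)) -addrA scalerBl scale1r.
rewrite sqnormD dotpZr dotp_proj_perp !mulr0 addr0 (sqnormZ (1 - t / s)).
have -> : (1 - t / s) ^+ 2 * sqnorm w = (s - t) ^+ 2 by rewrite -ss; field; rewrite gt_eqF.
have st : (s - t) ^+ 2 <= 2 * (sqnorm w - height2) ^+ 2.
  have sum_ge : 1 / 2 <= (s + t) ^+ 2.
    rewrite sqrrD; have := mulr_ge0 (ltW s_gt0) t_ge0; have := sqr_ge0 s.
    have := height2_ge_half; lra.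
  have -> : sqnorm w - height2 = (s - t) * (s + t) by rewrite -ss -tt; ring.
  rewrite exprMn; have := ler_wpM2l (sqr_ge0 (s - t)) sum_ge.
  move: ((s - t) ^+ 2) ((s + t) ^+ 2) => a b; lra.
have diff_sq : (sqnorm w - height2) ^+ 2 <= 4 * E ^+ 2.
  have := sqnorm_perp_near; move: (sqnorm w - height2) => x.
  by rewrite ler_norml => /andP[? ?]; nra.
have := sqnorm_proj_near; lra.
Qed.

End NearApex.

Lemma regular_seq_extend p (E : real) :
  (forall j, (j < k)%N -> `|sqnorm (p - f j) - 1| <= E) -> E * (8 * k%:R + 4) <= 1 ->
  regular_seq k.+1 (fun j => if j == k then apex k f p else f j).
Proof.
move=> p_near E_small i j; rewrite !ltnS (leq_eqVlt i) (leq_eqVlt j).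
have apex_f l : (l < k)%N -> sqnorm (apex k f p - f l) = 1.
  by move=> lk; rewrite (sqnorm_apex_sub (Ordinal lk)) // (sqnorm_perp_gt0 p_near E_small).
case/orP=> [/eqP->|ik]; case/orP=> [/eqP->|jk].
- by rewrite eqxx.
- by rewrite eqxx (ltn_eqF jk) => _; exact: apex_f.
- by rewrite eqxx (ltn_eqF ik) sqnormBC => _; exact: apex_f.
- by rewrite (ltn_eqF ik) (ltn_eqF jk); exact: f_reg.
Qed.

End Extension.

Lemma sqnormD_near1 d (u v : pt d) (dl B : real) : 0 < dl -> dl <= 1 -> 0 <= B ->
  1 - dl <= sqnorm u <= 1 -> sqnorm v <= B * dl ^+ 2 ->
  `|sqnorm (u + v) - 1| <= (2 + 2 * B) * dl.
Proof.
move=> dl_gt0 dl_le1 B_ge0 /andP[u_ge u_le] v_le.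
have := normr_dotp_le u v dl_gt0; rewrite ler_norml => /andP[? ?].
have v_div : sqnorm v / dl <= B * dl by rewrite ler_pdivrMr // -mulrA -expr2.
have v_lin : sqnorm v <= B * dl.
  have := mulr_ge0 (mulr_ge0 B_ge0 (ltW dl_gt0)) (_ : 0 <= 1 - dl); rewrite subr_ge0.
  by move/(_ dl_le1); rewrite expr2 in v_le; nra.
have := sqnorm_ge0 v; rewrite sqnormD ler_norml => ?.
have : dl * sqnorm u <= dl by rewrite ler_piMr // ltW.
by move=> ?; apply/andP; split; lra.
Qed.

(* Squared error after k extension steps, in units of dl^2: with B = extension_const k the
   next point is at squared distance 1 +- (2 + 2B) dl from the simplex ([sqnormD_near1]),
   and [apex_near] moves it by at most (2k + 8) ((2 + 2B) dl)^2. *)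
Fixpoint extension_const (k : nat) : real :=
  if k is k'.+1 then
    extension_const k' + (2 * k'%:R + 8) * (2 + 2 * extension_const k') ^+ 2
  else 0.

Lemma extension_const_ge0 k : 0 <= extension_const k.
Proof.
elim: k => //= k IH; rewrite addr_ge0 // mulr_ge0 ?sqr_ge0 //.
by rewrite addr_ge0 // mulr_ge0 // ler0n.
Qed.

Lemma extension_const_le : {homo extension_const : k l / (k <= l)%N >-> k <= l}.
Proof.
apply: homo_leq (@lexx _ _) (@le_trans _ _) _ => {}k /=.
rewrite lerDl mulr_ge0 ?sqr_ge0 // addr_ge0 // mulr_ge0 // ler0n.
Qed.

Definition extension_budget n : real := (8 * n%:R + 4) * (2 + 2 * extension_const n).

Lemma extension_budget_ge1 n : 1 <= extension_budget n.
Proof.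
rewrite /extension_budget; move: (ler0n real n) (extension_const_ge0 n).
by move: (n%:R) (extension_const n) => m B; nra.
Qed.

Lemma exists_regular_seq_near d (X : nat -> pt d) (dl : real) n :
  0 < dl -> dl * extension_budget n <= 1 ->
  (forall i j, (i < n.+1)%N -> (j < n.+1)%N -> i != j ->
     1 - dl <= sqnorm (X i - X j) <= 1) ->
  forall k, (k <= n.+1)%N -> exists Y : nat -> pt d, regular_seq k Y /\
    forall j, (j < k)%N -> sqnorm (X j - Y j) <= extension_const k * dl ^+ 2.
Proof.
move=> dl_gt0 dl_small X_near.
have B_ge0 := extension_const_ge0.
have dl_le1 : dl <= 1.
  by apply: le_trans dl_small; rewrite ler_peMr ?extension_budget_ge1 ?ltW.
rewrite /extension_budget in dl_small.
elim=> [_|k IH kn]; first by exists X.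
have [Y [Y_reg Y_near]] := IH (ltnW kn).
have [k0|k_gt0] := posnP k.
  exists X; split=> [i j|j]; rewrite k0 ?ltnS ?leqn0.
    by move=> /eqP-> /eqP->; rewrite eqxx.
  by rewrite subrr sqnorm0 mulr_ge0 ?sqr_ge0.
pose E := (2 + 2 * extension_const k) * dl.
have p_near j : (j < k)%N -> `|sqnorm (X k - Y j) - 1| <= E.
  move=> jk; have -> : X k - Y j = (X k - X j) + (X j - Y j) by rewrite addrA subrK.
  apply: sqnormD_near1 => //; last exact: Y_near.
  by apply: X_near; rewrite ?(ltn_trans jk) // gtn_eqF.
have E_small : E * (8 * k%:R + 4) <= 1.
  apply: le_trans dl_small; rewrite /E mulrAC mulrC ler_wpM2l ?(ltW dl_gt0) //.
  have kn' : (k <= n)%N by rewrite -ltnS.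
  have := extension_const_le kn'; have : k%:R <= n%:R :> real by rewrite ler_nat.
  have := B_ge0 k; have : 0 <= k%:R :> real := ler0n _ _; nra.
exists (fun j => if j == k then apex k Y (X k) else Y j); split.
  exact: regular_seq_extend p_near E_small.
move=> j; rewrite ltnS leq_eqVlt => /orP[/eqP->|jk].
  rewrite eqxx; apply: le_trans (apex_near k_gt0 Y_reg p_near E_small) _.
  by rewrite /= /E exprMn mulrA ler_wpM2r ?sqr_ge0 // lerDr.
rewrite (ltn_eqF jk); apply: le_trans (Y_near j jk) _.
by rewrite ler_wpM2r ?sqr_ge0 // extension_const_le.
Qed.

Lemma exists_regular_near d n (x : 'I_n.+1 -> pt d) (dl : real) :
  0 < dl -> dl * extension_budget n <= 1 ->
  (forall i j, i != j -> 1 - dl <= sqnorm (x i - x j) <= 1) ->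
  exists y : 'I_n.+1 -> pt d, (forall i j, i != j -> enorm (y i - y j) = 1) /\
    forall i, enorm (x i - y i) <= (extension_const n.+1 + 1) * dl.
Proof.
move=> dl_gt0 dl_small x_near.
have X_near i j : (i < n.+1)%N -> (j < n.+1)%N -> i != j ->
    1 - dl <= sqnorm (x (inord i) - x (inord j)) <= 1.
  move=> ilt jlt ij; apply: x_near.
  by apply: contra ij => /eqP/(congr1 val) /=; rewrite !inordK // => ->.
have [Y [Y_reg Y_near]] := exists_regular_seq_near dl_gt0 dl_small X_near (leqnn n.+1).
exists (fun i => Y i); split=> [i j ij|i].
  by rewrite enormE Y_reg ?sqrtr1.
have := Y_near i (ltn_ord i); rewrite inord_val enormE.
move: (extension_const n.+1) (extension_const_ge0 n.+1) => B B_ge0 near.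
have r_ge0 : 0 <= (B + 1) * dl by apply: mulr_ge0; [rewrite addr_ge0 | exact: ltW].
rewrite -(ger0_norm r_ge0) -sqrtr_sqr.
rewrite ler_sqrt ?sqr_ge0 //; apply: le_trans near _.
by rewrite exprMn ler_wpM2r ?sqr_ge0 //; nra.
Qed.

(** * Translation to sets *)

Lemma sqdist_le1_of_diam d n (x : 'I_n -> pt d) : diam (range x) <= 1 ->
  forall i j, sqnorm (x i - x j) <= 1.
Proof.
move=> x_diam i j.
have S_sup : has_sup [set enorm (u - v) | u in range x & v in range x].
  split; first by exists (enorm (x i - x j)), (x i) => //; exists (x j).
  exists (\sum_i0 \sum_j0 enorm (x i0 - x j0)) => _ [_ [i0 _ <-] [_ [j0 _ <-] <-]].
  rewrite (bigD1 i0) //= (bigD1 j0) //= -addrA lerDl.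
  by rewrite addr_ge0 ?sumr_ge0 // => *; rewrite ?sumr_ge0 // => *; exact: enorm_ge0.
have : enorm (x i - x j) <= 1.
  by apply: le_trans x_diam; apply: sup_upper_bound S_sup _ _; exists (x i) => //; exists (x j).
by rewrite -sqr_enorm; have := enorm_ge0 (x i - x j); nra.
Qed.

Lemma cheb_rad_le_ball d n (x : 'I_n.+1 -> pt d) (r : real) :
  0 <= r -> r <= cheb_rad (range x) ->
  forall c M, (forall i, sqnorm (c - x i) <= M) -> r ^+ 2 <= M.
Proof.
move=> r_ge0 r_le c M ball.
have M_ge0 : 0 <= M := le_trans (sqnorm_ge0 _) (ball ord0).
pose dists c' := [set enorm (c' - y) | y in range x].
have dists_sup c' : has_sup (dists c').
  split; first by exists (enorm (c' - x ord0)), (x ord0) => //; exists ord0.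
  exists (\sum_i enorm (c' - x i)) => _ [_ [i _ <-] <-].
  by rewrite (bigD1 i) //= lerDl sumr_ge0 // => *; exact: enorm_ge0.
have rad_le : cheb_rad (range x) <= sup (dists c).
  apply: ge_inf; last by exists c.
  exists 0 => _ [c' _ <-]; apply: le_trans (enorm_ge0 (c' - x ord0)) _.
  by apply: sup_upper_bound (dists_sup c') _ _; exists (x ord0) => //; exists ord0.
have sup_le : sup (dists c) <= Num.sqrt M.
  apply: ge_sup; first by exists (enorm (c - x ord0)), (x ord0) => //; exists ord0.
  by move=> _ [_ [i _ <-] <-]; rewrite enormE ler_sqrt.
have := le_trans r_le (le_trans rad_le sup_le).
by rewrite -(ler_pXn2r (n := 2)) ?nnegrE ?sqrtr_ge0 // sqr_sqrtr.
Qed.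

Lemma hdist_range_le d n (x y : 'I_n.+1 -> pt d) (m : real) :
  (forall i, enorm (x i - y i) <= m) -> hdist (range x) (range y) <= m.
Proof.
move=> xy_near.
have dists_lb (A : set (pt d)) (g : pt d -> real) : (forall z, 0 <= g z) ->
    has_lbound [set g z | z in A].
  by move=> g_ge0; exists 0 => _ [z _ <-].
rewrite /hdist ge_max; apply/andP; split; apply: ge_sup.
- by exists (inf [set enorm (x ord0 - b) | b in range y]), (x ord0) => //; exists ord0.
- move=> _ [_ [i _ <-] <-]; apply: le_trans (xy_near i).
  apply: ge_inf; first by apply: dists_lb => w; exact: enorm_ge0.
  by exists (y i) => //; exists i.
- by exists (inf [set enorm (a - y ord0) | a in range x]), (y ord0) => //; exists ord0.
- move=> _ [_ [i _ <-] <-]; apply: le_trans (xy_near i).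
  apply: ge_inf; first by apply: dists_lb => w; exact: enorm_ge0.
  by exists (x i) => //; exists i.
Qed.

Lemma sqdist_near1_of_cheb_rad d n (x : 'I_n.+1 -> pt d) (e : real) :
  0 < e -> jung_const n * e <= 1 -> diam (range x) <= 1 ->
  (1 - e) * Num.sqrt (n%:R / (2 * (n.+1)%:R)) <= cheb_rad (range x) ->
  forall i j, i != j -> 1 - jung_const n * e <= sqnorm (x i - x j) <= 1.
Proof.
move=> e_gt0 e_small x_diam x_rad i j ij.
have x_sqdist := sqdist_le1_of_diam x_diam.
have e_le1 : e <= 1.
  by apply: le_trans e_small; rewrite ler_peMl ?jung_const_ge1 // ltW.
have R2_ge0 : 0 <= n%:R / (2 * (n.+1)%:R) :> real by rewrite divr_ge0 ?mulr_ge0.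
have r_ge0 : 0 <= (1 - e) * Num.sqrt (n%:R / (2 * (n.+1)%:R)).
  by rewrite mulr_ge0 ?sqrtr_ge0 // subr_ge0.
have x_ball c M : (forall i, sqnorm (c - x i) <= M) ->
    (1 - e) ^+ 2 * (n%:R / (2 * (n.+1)%:R)) <= M.
  by move=> /(cheb_rad_le_ball r_ge0 x_rad); rewrite exprMn sqr_sqrtr.
by rewrite x_sqdist andbT (jung_stability e_gt0 x_sqdist x_ball).
Qed.

Unset Implicit Arguments.

Theorem mainTheorem8 (d : nat) (hd : (1 <= d)%N) :
  exists (c_d eps_d : real), 0 < c_d /\ 0 < eps_d /\
    forall (eps : real) (x : 'I_d.+1 -> pt d),
      0 < eps -> eps <= eps_d ->
      diam (range x) <= 1 ->
      cheb_rad (range x) >= (1 - eps) * Num.sqrt (d%:R / (2 * (d.+1)%:R)) ->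
      exists y : 'I_d.+1 -> pt d,
        regular_unit_simplex y /\ hdist (range x) (range y) <= c_d * eps.
Proof.
(* The argument covers d = 0 as well. *)
have K_ge1 := jung_const_ge1 d; have W_ge1 := extension_budget_ge1 d.
have B_ge0 := extension_const_ge0 d.+1.
exists ((extension_const d.+1 + 1) * jung_const d), (jung_const d * extension_budget d)^-1.
split; first by rewrite mulr_gt0 //; lra.
split; first by rewrite invr_gt0 mulr_gt0 //; lra.
move=> eps x eps_gt0 eps_le x_diam x_rad.
have KW_gt0 : 0 < jung_const d * extension_budget d by rewrite mulr_gt0 //; lra.
have dl_small : jung_const d * eps * extension_budget d <= 1.
  have := ler_wpM2r (ltW KW_gt0) eps_le.
  by rewrite mulVf ?gt_eqF // mulrA (mulrC eps).
have dl_le1 : jung_const d * eps <= 1.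
  by apply: le_trans dl_small; rewrite ler_peMr // mulr_ge0 //; lra.
have x_near := sqdist_near1_of_cheb_rad eps_gt0 dl_le1 x_diam x_rad.
have dl_gt0 : 0 < jung_const d * eps by rewrite mulr_gt0 //; lra.
have [y [y_reg y_near]] := exists_regular_near dl_gt0 dl_small x_near.
exists y; split=> //; apply: hdist_range_le => i.
by rewrite -mulrA.
Qed.
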